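(* Let $*$ (revision) and $\div$ (contraction) be operators on belief states satisfying the standing assumptions described in the context. Consider the principle (EHI) for all belief states $\Psi$ and sentences $A,B$: $[(\Psi \div A) * B] = [\Psi * B] \cap [(\Psi * \neg A) * B]$, and the principle (EHIC) for all belief states $\Psi$ and sentences $A,B$: $[(\Psi \div A) \div B] = [\Psi] \cap [\Psi * \neg B] \cap [\Psi * \neg A] \cap [(\Psi * \neg A) * \neg B]$. Then EHI entails EHIC. Moreover, if $*$ satisfies (AGM$*3$) $[\Psi * A] \subseteq \mathrm{Cn}([\Psi] \cup \{A\})$ and the operators satisfy the Levi Identity (LI) $[\Psi * A] = \mathrm{Cn}([\Psi \div \neg A] \cup \{A\})$ for all $\Psi, A$, then EHI and EHIC are equivalent.
   Context: $L$ is a finitely generated propositional language; $\mathrm{Cn}$ denotes classical logical consequence. Belief states $\Psi$ are primitive objects, each determining a deductively closed belief set $[\Psi] \subseteq L$. A revision operator $*$ and a contraction operator $\div$ map a belief state $\Psi$ and a sentence $A$ to belief states $\Psi * A$ and $\Psi \div A$. Standing assumptions: $*$ satisfies the AGM revision postulates, $\div$ satisfies the AGM contraction postulates (in particular, if $\mathrm{Cn}(A)=\mathrm{Cn}(B)$ then $[\Psi \div A] = [\Psi \div B]$ and $[\Psi * A]=[\Psi*B]$), and the Harper Identity holds: $[\Psi \div A] = [\Psi] \cap [\Psi * \neg A]$ for all $\Psi, A$. *)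

From mathcomp Require Import all_boot.

Set Implicit Arguments.
Unset Strict Implicit.
Unset Printing Implicit Defensive.

Inductive form (At : Type) : Type :=
| Var : At -> form At
| Bot : form At
| Neg : form At -> form At
| And : form At -> form At -> form At
| Or  : form At -> form At -> form At
| Imp : form At -> form At -> form At.

Arguments Bot {At}.

Fixpoint eval (At : Type) (v : At -> bool) (f : form At) : bool :=
  match f with
  | Var a => v a
  | Bot => false
  | Neg g => ~~ eval v g
  | And g h => eval v g && eval v h
  | Or g h => eval v g || eval v h
  | Imp g h => eval v g ==> eval v h
  end.

Definition fset (At : Type) := form At -> Prop.

(* Classical consequence Cn (semantic; equals derivability by soundness and
   completeness of classical propositional logic). *)
Definition Cn (At : Type) (G : fset At) : fset At :=
  fun phi => forall v : At -> bool, (forall psi, G psi -> eval v psi) -> eval v phi.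

Definition sing (At : Type) (A : form At) : fset At := fun phi => phi = A.
Definition cup (At : Type) (X Y : fset At) : fset At := fun phi => X phi \/ Y phi.
Definition cap (At : Type) (X Y : fset At) : fset At := fun phi => X phi /\ Y phi.
Definition subset (At : Type) (X Y : fset At) : Prop := forall phi, X phi -> Y phi.
Definition seteq (At : Type) (X Y : fset At) : Prop := forall phi, X phi <-> Y phi.

Definition equivf (At : Type) (A B : form At) : Prop :=
  seteq (Cn (sing A)) (Cn (sing B)).

Definition consistent_form (At : Type) (A : form At) : Prop :=
  exists v : At -> bool, eval v A.

(* Belief states: an arbitrary type S, with bel : S -> belief set [Psi]. *)

Definition closed_states (At : Type) (S : Type) (bel : S -> fset At) : Prop :=
  forall Psi, subset (Cn (bel Psi)) (bel Psi).

Definition AGM_revision (At : Type) (S : Type) (bel : S -> fset At)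
  (rev : S -> form At -> S) : Prop :=
  (forall Psi A, subset (Cn (bel (rev Psi A))) (bel (rev Psi A))) /\
  (forall Psi A, bel (rev Psi A) A) /\
  (forall Psi A, subset (bel (rev Psi A)) (Cn (cup (bel Psi) (sing A)))) /\
  (forall Psi A, ~ bel Psi (Neg A) ->
     subset (Cn (cup (bel Psi) (sing A))) (bel (rev Psi A))) /\
  (forall Psi A, consistent_form A -> ~ bel (rev Psi A) Bot) /\
  (forall Psi A B, equivf A B -> seteq (bel (rev Psi A)) (bel (rev Psi B))) /\
  (forall Psi A B, subset (bel (rev Psi (And A B)))
                          (Cn (cup (bel (rev Psi A)) (sing B)))) /\
  (forall Psi A B, ~ bel (rev Psi A) (Neg B) ->
     subset (Cn (cup (bel (rev Psi A)) (sing B))) (bel (rev Psi (And A B)))).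

Definition AGM_contraction (At : Type) (S : Type) (bel : S -> fset At)
  (con : S -> form At -> S) : Prop :=
  (forall Psi A, subset (Cn (bel (con Psi A))) (bel (con Psi A))) /\
  (forall Psi A, subset (bel (con Psi A)) (bel Psi)) /\
  (forall Psi A, ~ bel Psi A -> subset (bel Psi) (bel (con Psi A))) /\
  (forall Psi A, ~ Cn (fun _ => False) A -> ~ bel (con Psi A) A) /\
  (forall Psi A, subset (bel Psi) (Cn (cup (bel (con Psi A)) (sing A)))) /\
  (forall Psi A B, equivf A B -> seteq (bel (con Psi A)) (bel (con Psi B))) /\
  (forall Psi A B, subset (cap (bel (con Psi A)) (bel (con Psi B)))
                          (bel (con Psi (And A B)))) /\
  (forall Psi A B, ~ bel (con Psi (And A B)) A ->
     subset (bel (con Psi (And A B))) (bel (con Psi A))).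

Definition HarperIdentity (At : Type) (S : Type) (bel : S -> fset At)
  (rev con : S -> form At -> S) : Prop :=
  forall Psi A, seteq (bel (con Psi A)) (cap (bel Psi) (bel (rev Psi (Neg A)))).

Definition LeviIdentity (At : Type) (S : Type) (bel : S -> fset At)
  (rev con : S -> form At -> S) : Prop :=
  forall Psi A, seteq (bel (rev Psi A)) (Cn (cup (bel (con Psi (Neg A))) (sing A))).

Definition AGM3 (At : Type) (S : Type) (bel : S -> fset At)
  (rev : S -> form At -> S) : Prop :=
  forall Psi A, subset (bel (rev Psi A)) (Cn (cup (bel Psi) (sing A))).

Definition EHI (At : Type) (S : Type) (bel : S -> fset At)
  (rev con : S -> form At -> S) : Prop :=
  forall Psi A B, seteq (bel (rev (con Psi A) B))
                        (cap (bel (rev Psi B)) (bel (rev (rev Psi (Neg A)) B))).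

Definition EHIC (At : Type) (S : Type) (bel : S -> fset At)
  (rev con : S -> form At -> S) : Prop :=
  forall Psi A B, seteq (bel (con (con Psi A) B))
    (cap (cap (cap (bel Psi) (bel (rev Psi (Neg B))))
              (bel (rev Psi (Neg A))))
         (bel (rev (rev Psi (Neg A)) (Neg B)))).

From mathcomp Require Import all_boot.

(* EHI entails EHIC by applying the Harper Identity twice: once to [Psi ÷ A],
   once to [(Psi ÷ A) ÷ B].  For the converse, the Levi and Harper Identities
   together give [[Psi * B] = Cn(([Psi] ∩ [Psi * B]) ∪ {B})], and for two
   deductively closed sets [Cn((X ∩ Y) ∪ {B}) = Cn(X ∪ {B}) ∩ Cn(Y ∪ {B})]
   by the deduction theorem; so revising the EHIC description of
   [(Psi ÷ A) ÷ ¬B] by [B] splits into the two revisions of EHI. *)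

Section Consequence.
Context {At : Type}.
Implicit Types (X Y : fset At) (B : form At).

Lemma Cn_subset X Y : subset X Y -> subset (Cn X) (Cn Y).
Proof. by move=> sXY phi CXphi v vY; apply: CXphi => psi /sXY; apply: vY. Qed.

Lemma Cn_seteq X Y : seteq X Y -> seteq (Cn X) (Cn Y).
Proof. by move=> eXY phi; split; apply: Cn_subset => psi /eXY. Qed.

Lemma cup1_seteq X Y B : seteq X Y -> seteq (cup X (sing B)) (cup Y (sing B)).
Proof. by move=> eXY phi; have := eXY phi; rewrite /cup; tauto. Qed.

Lemma cap_Cn_closed X Y : subset (Cn X) X -> subset (Cn Y) Y ->
  subset (Cn (cap X Y)) (cap X Y).
Proof.
move=> clX clY phi CXYphi.
by split; [apply: clX | apply: clY]; apply: Cn_subset CXYphi => psi [].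
Qed.

Lemma Cn_cup1_Imp X B phi : Cn (cup X (sing B)) phi -> Cn X (Imp B phi).
Proof. by move=> CXBphi v vX /=; apply/implyP => vB; apply: CXBphi => psi [/vX|->]. Qed.

Lemma Cn_cup1_cap X Y B : subset (Cn X) X -> subset (Cn Y) Y ->
  seteq (Cn (cup (cap X Y) (sing B)))
        (cap (Cn (cup X (sing B))) (Cn (cup Y (sing B)))).
Proof.
move=> clX clY phi; split.
  by move=> CXYphi; split; apply: Cn_subset CXYphi => psi [[? ?]|?]; [left|right|left|right].
move=> [/Cn_cup1_Imp/clX XBphi /Cn_cup1_Imp/clY YBphi] v vXYB.
have vB : eval v B by apply: vXYB; right.
have : eval v (Imp B phi) by apply: vXYB; left.
by rewrite /= vB.
Qed.

Lemma equivf_NegNeg B : equivf (Neg (Neg B)) B.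
Proof.
by move=> phi; split=> CBphi v vB; apply: CBphi => psi ->; have /= := vB _ erefl;
  rewrite negbK.
Qed.

End Consequence.

Arguments Cn_seteq {At X Y}.
Arguments cup1_seteq {At X Y}.
Arguments Cn_cup1_cap {At X Y}.

Section IteratedHarper.
Context {At S : Type} {bel : S -> fset At} {rev con : S -> form At -> S}.
Hypothesis bel_closed : closed_states bel.
Hypothesis rev_ext : forall Psi A B, equivf A B -> seteq (bel (rev Psi A)) (bel (rev Psi B)).
Hypothesis harper : HarperIdentity bel rev con.

Lemma EHI_EHIC : EHI bel rev con -> EHIC bel rev con.
Proof.
move=> ehi Psi A B phi.
have := harper (con Psi A) B phi; have := harper Psi A phi.
have := ehi Psi A (Neg B) phi.
rewrite /cap; tauto.
Qed.

Lemma bel_con_Neg Psi B :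
  seteq (bel (con Psi (Neg B))) (cap (bel Psi) (bel (rev Psi B))).
Proof.
move=> phi; have := harper Psi (Neg B) phi.
have := rev_ext Psi _ _ (equivf_NegNeg B) phi.
rewrite /cap; tauto.
Qed.

Hypothesis levi : LeviIdentity bel rev con.

Lemma bel_rev_Levi_Harper Psi B :
  seteq (bel (rev Psi B)) (Cn (cup (cap (bel Psi) (bel (rev Psi B))) (sing B))).
Proof.
move=> phi; apply: iff_trans (levi Psi B phi) _.
exact/Cn_seteq/cup1_seteq/bel_con_Neg.
Qed.

Lemma EHIC_EHI : EHIC bel rev con -> EHI bel rev con.
Proof.
move=> ehic Psi A B.
set Psi' := rev Psi (Neg A).
pose X := cap (bel Psi) (bel (rev Psi B)).
pose Y := cap (bel Psi') (bel (rev Psi' B)).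
have clX : subset (Cn X) X by apply: cap_Cn_closed.
have clY : subset (Cn Y) Y by apply: cap_Cn_closed.
have con_con : seteq (bel (con (con Psi A) (Neg B))) (cap X Y).
  move=> phi; have := ehic Psi A (Neg B) phi.
  have := rev_ext Psi _ _ (equivf_NegNeg B) phi.
  have := rev_ext Psi' _ _ (equivf_NegNeg B) phi.
  rewrite /X /Y /cap; tauto.
move=> phi; have := levi (con Psi A) B phi.
have := Cn_seteq (cup1_seteq B con_con) phi; have := Cn_cup1_cap B clX clY phi.
have := bel_rev_Levi_Harper Psi B phi; have := bel_rev_Levi_Harper Psi' B phi.
rewrite /X /Y /cap; tauto.
Qed.

End IteratedHarper.

Theorem proposition1 (At : finType) (S : Type) (bel : S -> fset At)
  (rev con : S -> form At -> S)
  (Hclosed : closed_states bel)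
  (Hrev : AGM_revision bel rev)
  (Hcon : AGM_contraction bel con)
  (HHI : HarperIdentity bel rev con) :
  (EHI bel rev con -> EHIC bel rev con) /\
  (AGM3 bel rev -> LeviIdentity bel rev con ->
     (EHI bel rev con <-> EHIC bel rev con)).
Proof.
have [_ [_ [_ [_ [_ [rev_ext _]]]]]] := Hrev.
have ehi_ehic := EHI_EHIC HHI.
split=> // _ levi; split=> //.
exact: EHIC_EHI Hclosed rev_ext HHI levi.
Qed.
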